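(* Let $n_0,n_1\ge 1$ and $r\ge 2$ be integers such that $\left(\frac{1}{n_0}\right)^{\frac{1}{r-1}}+\left(\frac{1}{n_1}\right)^{\frac{1}{r-1}}\ge 1$. Let $$p=\frac{\left(\frac{1}{n_0}\right)^{\frac{1}{r-1}}}{\left(\frac{1}{n_0}\right)^{\frac{1}{r-1}}+\left(\frac{1}{n_1}\right)^{\frac{1}{r-1}}}.$$ Then $n_0p^r+n_1(1-p)^r\le 1$. *)

From Stdlib Require Import Reals.
Open Scope R_scope.

Definition root_inv (n r : nat) : R := Rpower (/ INR n) (/ (INR r - 1)).

(* With a = (1/n0)^(1/(r-1)) and b = (1/n1)^(1/(r-1)) we have n0 a^(r-1) = 1 = n1 b^(r-1),
   so n0 p^r + n1 (1-p)^r = (a + b) / (a + b)^r = 1 / (a + b)^(r-1), which is at most 1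
   exactly when a + b >= 1. *)
From Stdlib Require Import Reals Lra Lia.
Open Scope R_scope.

Lemma root_inv_pos (n r : nat) : 0 < root_inv n r.
Proof. apply exp_pos. Qed.

Lemma pow_root_inv (n m : nat) : (1 <= m)%nat -> 0 < INR n ->
  root_inv n (S m) ^ m = / INR n.
Proof.
  intros Hm Hn.
  assert (Hm' : 0 < INR m) by (apply lt_0_INR; lia).
  unfold root_inv.
  rewrite <- Rpower_pow by apply exp_pos.
  rewrite Rpower_mult.
  replace (/ (INR (S m) - 1) * INR m) with 1.
  - apply Rpower_1, Rinv_0_lt_compat, Hn.
  - rewrite S_INR. field. lra.
Qed.

Lemma normalized_pow_sum (a b c d : R) (m : nat) : 0 < a -> 0 < b ->
  c * a ^ m = 1 -> d * b ^ m = 1 ->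
  c * (a / (a + b)) ^ S m + d * (b / (a + b)) ^ S m = / (a + b) ^ m.
Proof.
  intros Ha Hb Hca Hdb.
  assert (Hab : (a + b) ^ m <> 0) by (apply pow_nonzero; lra).
  unfold Rdiv. rewrite !Rpow_mult_distr, pow_inv. simpl.
  transitivity ((c * a ^ m * a + d * b ^ m * b) / ((a + b) * (a + b) ^ m)).
  - field. lra.
  - rewrite Hca, Hdb. field. lra.
Qed.

Theorem lemma2p2 (n0 n1 r : nat) :
  (1 <= n0)%nat -> (1 <= n1)%nat -> (2 <= r)%nat ->
  root_inv n0 r + root_inv n1 r >= 1 ->
  let p := root_inv n0 r / (root_inv n0 r + root_inv n1 r) in
  INR n0 * p ^ r + INR n1 * (1 - p) ^ r <= 1.
Proof.
  intros H0 H1 Hr Hsum p.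
  destruct r as [|m]; [lia|].
  assert (Hm : (1 <= m)%nat) by lia.
  assert (Hn0 : 0 < INR n0) by (apply lt_0_INR; lia).
  assert (Hn1 : 0 < INR n1) by (apply lt_0_INR; lia).
  pose proof (root_inv_pos n0 (S m)) as Ha.
  pose proof (root_inv_pos n1 (S m)) as Hb.
  assert (Hp' : 1 - p = root_inv n1 (S m) / (root_inv n0 (S m) + root_inv n1 (S m)))
    by (unfold p; field; lra).
  rewrite Hp'; unfold p.
  rewrite normalized_pow_sum by
    (auto; rewrite pow_root_inv by assumption; field; lra).
  rewrite <- Rinv_1. apply Rinv_le_contravar; [lra|].
  apply pow_R1_Rle. lra.
Qed.
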